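(* Let $\mathcal{C}$ be a category with finite products and an exponentiable parametrised natural numbers object $N$. (1) Every iterative midpoint object $(A,m)$ is a supermidpoint object under its associated infinitary operation $M$ (the unique $M\colon A^N\to A$ with $M_i\,x_i=m(x_0,M_i\,x_{i+1})$), and if $(A,m)$ is cancellative then so is this supermidpoint object. (2) Every cancellative supermidpoint object $(A,M)$ is an m-convex body under its associated binary operation $m(x,y)=M(x,y,y,y,\dots)$.
   Context: Equations are between generalised elements; $M_i\,x_i$ denotes $M((x_i))$. A midpoint object is $(A,m)$ with $m\colon A\times A\to A$ satisfying $m(x,x)=x$, $m(x,y)=m(y,x)$, $m(m(x,y),m(z,w))=m(m(x,z),m(y,w))$; it is cancellative if $m(x,y)=m(x,z)$ implies $y=z$; it is iterative if for every map $c\colon X\to A\times X$ there is a unique $u\colon X\to A$ with $m\circ(\mathrm{id}\times u)\circ c=u$. An m-convex body is a cancellative iterative midpoint object. A supermidpoint object is an object $A$ with $M\colon A^N\to A$ satisfying: $M(x,x,x,\dots)=x$; $M(x,y,y,y,\dots)=M(y,x,x,x,\dots)$; $M_i M_j\,x_{ij}=M_j M_i\,x_{ij}$; and $M_i\,x_i=M(x_0, M_i x_{i+1}, M_i x_{i+1},\dots)$. It is cancellative if the binary operation $m(x,y)=M(x,y,y,y,\dots)$ satisfies cancellation. *)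

Set Implicit Arguments.

Record CatPN := {
  Ob : Type;
  Hom : Ob -> Ob -> Type;
  idm : forall A, Hom A A;
  cmp : forall A B C, Hom B C -> Hom A B -> Hom A C;
  cmp_idl : forall A B (f : Hom A B), cmp (idm B) f = f;
  cmp_idr : forall A B (f : Hom A B), cmp f (idm A) = f;
  cmp_assoc : forall A B C D (h : Hom C D) (g : Hom B C) (f : Hom A B),
      cmp h (cmp g f) = cmp (cmp h g) f;
  term : Ob;
  bang : forall A, Hom A term;
  bang_uniq : forall A (f : Hom A term), f = bang A;
  prod : Ob -> Ob -> Ob;
  pr1 : forall A B, Hom (prod A B) A;
  pr2 : forall A B, Hom (prod A B) B;
  pair : forall X A B, Hom X A -> Hom X B -> Hom X (prod A B);
  pair_pr1 : forall X A B (f : Hom X A) (g : Hom X B), cmp (pr1 A B) (pair f g) = f;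
  pair_pr2 : forall X A B (f : Hom X A) (g : Hom X B), cmp (pr2 A B) (pair f g) = g;
  pair_uniq : forall X A B (h : Hom X (prod A B)),
      h = pair (cmp (pr1 A B) h) (cmp (pr2 A B) h);
  nno : Ob;
  zero : Hom term nno;
  succ : Hom nno nno;
  nrec : forall X Y, Hom X Y -> Hom Y Y -> Hom (prod X nno) Y;
  nrec_zero : forall X Y (f : Hom X Y) (g : Hom Y Y),
      cmp (nrec f g) (pair (idm X) (cmp zero (bang X))) = f;
  nrec_succ : forall X Y (f : Hom X Y) (g : Hom Y Y),
      cmp (nrec f g) (pair (pr1 X nno) (cmp succ (pr2 X nno))) = cmp g (nrec f g);
  nrec_uniq : forall X Y (f : Hom X Y) (g : Hom Y Y) (h : Hom (prod X nno) Y),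
      cmp h (pair (idm X) (cmp zero (bang X))) = f ->
      cmp h (pair (pr1 X nno) (cmp succ (pr2 X nno))) = cmp g h ->
      h = nrec f g;
  expN : Ob -> Ob;
  ev : forall A, Hom (prod (expN A) nno) A;
  lam : forall X A, Hom (prod X nno) A -> Hom X (expN A);
  lam_beta : forall X A (f : Hom (prod X nno) A),
      cmp (ev A) (pair (cmp (lam f) (pr1 X nno)) (pr2 X nno)) = f;
  lam_uniq : forall X A (f : Hom (prod X nno) A) (g : Hom X (expN A)),
      cmp (ev A) (pair (cmp g (pr1 X nno)) (pr2 X nno)) = f -> g = lam f
}.

Arguments idm {c} A.
Arguments cmp {c A B C} _ _.
Arguments term {c}.
Arguments bang {c} A.
Arguments prod {c} _ _.
Arguments pr1 {c A B}.
Arguments pr2 {c A B}.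
Arguments pair {c X A B} _ _.
Arguments nno {c}.
Arguments zero {c}.
Arguments succ {c}.
Arguments nrec {c X Y} _ _.
Arguments expN {c} _.
Arguments ev {c A}.
Arguments lam {c X A} _.

Section Derived.
Variable C : CatPN.
Local Notation Hom := (Hom C).

(* Generalised-element conventions: an element x : Hom X A ; a sequence
   (x_i)_i of generalised elements at stage X is a map Hom (prod X nno) A. *)

Definition app2 {X A : Ob C} (m : Hom (prod A A) A) (x y : Hom X A) : Hom X A :=
  cmp m (pair x y).

Definition Mapp {X A : Ob C} (M : Hom (expN A) A) (x : Hom (prod X nno) A) : Hom X A :=
  cmp M (lam x).

Definition at0 {X A : Ob C} (x : Hom (prod X nno) A) : Hom X A :=
  cmp x (pair (idm X) (cmp zero (bang X))).

Definition shift {X A : Ob C} (x : Hom (prod X nno) A) : Hom (prod X nno) A :=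
  cmp x (pair pr1 (cmp succ pr2)).

Definition constseq {X A : Ob C} (x : Hom X A) : Hom (prod X nno) A :=
  cmp x pr1.

(* the sequence (a, b, b, b, ...), defined by recursion on N with values in A*A *)
Definition seqab {X A : Ob C} (a b : Hom X A) : Hom (prod X nno) A :=
  cmp pr1 (nrec (pair a b) (pair (@pr2 C A A) (@pr2 C A A))).

Definition swapN {X : Ob C} : Hom (prod (prod X nno) nno) (prod (prod X nno) nno) :=
  pair (pair (cmp pr1 pr1) pr2) (cmp pr2 pr1).

Definition is_midpoint {A : Ob C} (m : Hom (prod A A) A) : Prop :=
  (forall X (x : Hom X A), app2 m x x = x) /\
  (forall X (x y : Hom X A), app2 m x y = app2 m y x) /\
  (forall X (x y z w : Hom X A),
      app2 m (app2 m x y) (app2 m z w) = app2 m (app2 m x z) (app2 m y w)).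

Definition mcancellative {A : Ob C} (m : Hom (prod A A) A) : Prop :=
  forall X (x y z : Hom X A), app2 m x y = app2 m x z -> y = z.

Definition iterative {A : Ob C} (m : Hom (prod A A) A) : Prop :=
  forall X (c : Hom X (prod A X)),
    exists u : Hom X A,
      cmp m (cmp (pair pr1 (cmp u pr2)) c) = u /\
      forall v : Hom X A, cmp m (cmp (pair pr1 (cmp v pr2)) c) = v -> v = u.

Definition mconvex_body {A : Ob C} (m : Hom (prod A A) A) : Prop :=
  is_midpoint m /\ mcancellative m /\ iterative m.

Definition is_supermidpoint {A : Ob C} (M : Hom (expN A) A) : Prop :=
  (forall X (x : Hom X A), Mapp M (constseq x) = x) /\
  (forall X (x y : Hom X A), Mapp M (seqab x y) = Mapp M (seqab y x)) /\
  (forall X (x : Hom (prod (prod X nno) nno) A),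
      Mapp M (Mapp M x) = Mapp M (Mapp M (cmp x swapN))) /\
  (forall X (x : Hom (prod X nno) A),
      Mapp M x = Mapp M (seqab (at0 x) (Mapp M (shift x)))).

Definition binop_of {A : Ob C} (M : Hom (expN A) A) : Hom (prod A A) A :=
  Mapp M (seqab pr1 pr2).

Definition super_cancellative {A : Ob C} (M : Hom (expN A) A) : Prop :=
  mcancellative (binop_of M).

Definition assoc_infop {A : Ob C} (m : Hom (prod A A) A) (M : Hom (expN A) A) : Prop :=
  forall X (x : Hom (prod X nno) A), Mapp M x = app2 m (at0 x) (Mapp M (shift x)).

End Derived.

Arguments app2 {C X A}.
Arguments Mapp {C X A}.
Arguments at0 {C X A}.
Arguments shift {C X A}.
Arguments constseq {C X A}.
Arguments seqab {C X A}.
Arguments swapN {C X}.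
Arguments is_midpoint {C A}.
Arguments mcancellative {C A}.
Arguments iterative {C A}.
Arguments mconvex_body {C A}.
Arguments is_supermidpoint {C A}.
Arguments binop_of {C A}.
Arguments super_cancellative {C A}.
Arguments assoc_infop {C A}.

(* For (2): writing m for the binary operation of M, the commutation law
   M_i M_j = M_j M_i makes M affine, M_i m(x_i, y_i) = m(M_i x_i, M_i y_i).
   Given c = (a, g) : X -> A * X, the orbit x, g x, g^2 x, ... turns a solution
   v of v = m(a, v g) into a sequence y_i = v(g^i x) with y_i = m(a_i, y_{i+1});
   applying M and comparing with M_i y_i = m(y_0, M_i y_{i+1}) gives, by
   cancellation, v = M_i a(g^i x), which is thus the unique solution.

   For (1): M is the solution of the iteration equation for
   c = (x_0, shift) on the generic sequence ev : A^N * N -> A.  Every law of a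
   supermidpoint object compares two natural operations on sequences that
   satisfy the same recursion F(s) = m(h(s), F(shift s)); by iterativity at the
   generic stage and naturality, such operations coincide. *)
From Stdlib Require Import Setoid.
Set Implicit Arguments.

Section Midpoints.
Variable C : CatPN.

Lemma cmpA {A B D E : Ob C} (h : Hom C D E) (g : Hom C B D) (f : Hom C A B) :
  cmp (cmp h g) f = cmp h (cmp g f).
Proof. symmetry; apply cmp_assoc. Qed.

Lemma pair_cmp {Y X A B : Ob C} (f : Hom C X A) (g : Hom C X B) (h : Hom C Y X) :
  cmp (pair f g) h = pair (cmp f h) (cmp g h).
Proof.
  rewrite (pair_uniq _ _ _ _ (cmp (pair f g) h)), !cmp_assoc, pair_pr1, pair_pr2.
  reflexivity.
Qed.

Lemma pr1_pair_cmp {Y X A B : Ob C} (f : Hom C X A) (g : Hom C X B) (h : Hom C Y X) :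
  cmp pr1 (cmp (pair f g) h) = cmp f h.
Proof. rewrite cmp_assoc, pair_pr1. reflexivity. Qed.

Lemma pr2_pair_cmp {Y X A B : Ob C} (f : Hom C X A) (g : Hom C X B) (h : Hom C Y X) :
  cmp pr2 (cmp (pair f g) h) = cmp g h.
Proof. rewrite cmp_assoc, pair_pr2. reflexivity. Qed.

Lemma bang_cmp {X Y : Ob C} (f : Hom C Y X) : cmp (bang X) f = bang Y.
Proof. apply bang_uniq. Qed.

Lemma pair_pr1_pr2 {A B : Ob C} : pair (@pr1 C A B) pr2 = idm (prod A B).
Proof. rewrite (pair_uniq _ _ _ _ (idm (prod A B))), !cmp_idr. reflexivity. Qed.

Lemma pair_proj {X A B : Ob C} (h : Hom C X (prod A B)) :
  pair (cmp pr1 h) (cmp pr2 h) = h.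
Proof. symmetry; apply pair_uniq. Qed.

Ltac cat_simpl :=
  repeat progress rewrite ?cmpA, ?pair_cmp, ?pr1_pair_cmp, ?pr2_pair_cmp,
    ?pair_pr1, ?pair_pr2, ?cmp_idl, ?cmp_idr, ?bang_cmp, ?pair_pr1_pr2.

Lemma app2_cmp {X Y A : Ob C} (m : Hom C (prod A A) A) (x y : Hom C X A)
    (f : Hom C Y X) :
  cmp (app2 m x y) f = app2 m (cmp x f) (cmp y f).
Proof. unfold app2. rewrite cmpA, pair_cmp. reflexivity. Qed.

Lemma lam_cmp {X Y A : Ob C} (x : Hom C (prod X nno) A) (f : Hom C Y X) :
  cmp (lam x) f = lam (cmp x (pair (cmp f pr1) pr2)).
Proof.
  apply lam_uniq.
  transitivity (cmp (cmp ev (pair (cmp (lam x) pr1) pr2)) (pair (cmp f pr1) pr2)).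
  - cat_simpl. reflexivity.
  - rewrite lam_beta. reflexivity.
Qed.

Lemma Mapp_cmp {X Y A : Ob C} (M : Hom C (expN A) A) (x : Hom C (prod X nno) A)
    (f : Hom C Y X) :
  cmp (Mapp M x) f = Mapp M (cmp x (pair (cmp f pr1) pr2)).
Proof. unfold Mapp. rewrite cmpA, lam_cmp. reflexivity. Qed.

Definition uncurry {Z A : Ob C} (s : Hom C Z (expN A)) : Hom C (prod Z nno) A :=
  cmp ev (pair (cmp s pr1) pr2).

Lemma lam_uncurry {Z A : Ob C} (s : Hom C Z (expN A)) : lam (uncurry s) = s.
Proof. symmetry; apply lam_uniq; reflexivity. Qed.

Lemma lam_ev {A : Ob C} : lam (@ev C A) = idm (expN A).
Proof.
  rewrite <- (lam_uncurry (idm (expN A))). unfold uncurry. cat_simpl. reflexivity.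
Qed.

Lemma seqab_at0 {X A : Ob C} (a b : Hom C X A) : at0 (seqab a b) = a.
Proof. unfold at0, seqab. rewrite cmpA, nrec_zero, pair_pr1. reflexivity. Qed.

Lemma seqab_state_snd {X A : Ob C} (a b : Hom C X A) :
  cmp pr2 (nrec (pair a b) (pair (@pr2 C A A) (@pr2 C A A))) = cmp b pr1.
Proof.
  transitivity (nrec b (idm A)).
  - apply nrec_uniq.
    + rewrite cmpA, nrec_zero, pair_pr2. reflexivity.
    + rewrite cmpA, nrec_succ, <- cmpA, pair_pr2, cmp_idl. reflexivity.
  - symmetry. apply nrec_uniq; cat_simpl; reflexivity.
Qed.

Lemma seqab_shift {X A : Ob C} (a b : Hom C X A) : shift (seqab a b) = cmp b pr1.
Proof.
  unfold shift, seqab.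
  rewrite cmpA, nrec_succ, <- cmpA, pair_pr1, seqab_state_snd. reflexivity.
Qed.

Lemma seqab_uniq {X A : Ob C} (a b : Hom C X A) (s : Hom C (prod X nno) A) :
  at0 s = a -> shift s = cmp b pr1 -> s = seqab a b.
Proof.
  unfold at0, shift, seqab. intros s0 s_shift.
  rewrite <- (@nrec_uniq C _ _ (pair a b) (pair (@pr2 C A A) (@pr2 C A A)) (pair s (cmp b pr1))).
  - rewrite pair_pr1. reflexivity.
  - rewrite pair_cmp, s0. cat_simpl. reflexivity.
  - rewrite pair_cmp, s_shift. cat_simpl. reflexivity.
Qed.

Lemma seqab_cmpr {X Y A : Ob C} (a b : Hom C X A) (f : Hom C Y X) :
  cmp (seqab a b) (pair (cmp f pr1) pr2) = seqab (cmp a f) (cmp b f).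
Proof.
  apply seqab_uniq.
  - transitivity (cmp (at0 (seqab a b)) f).
    + unfold at0. cat_simpl. reflexivity.
    + rewrite seqab_at0. reflexivity.
  - transitivity (cmp (shift (seqab a b)) (pair (cmp f pr1) pr2)).
    + unfold shift. cat_simpl. reflexivity.
    + rewrite seqab_shift. cat_simpl. reflexivity.
Qed.

Lemma seqab_cmpl {X A B : Ob C} (a b : Hom C X A) (g : Hom C A B) :
  cmp g (seqab a b) = seqab (cmp g a) (cmp g b).
Proof.
  apply seqab_uniq.
  - transitivity (cmp g (at0 (seqab a b))).
    + unfold at0. rewrite cmpA. reflexivity.
    + rewrite seqab_at0. reflexivity.
  - transitivity (cmp g (shift (seqab a b))).
    + unfold shift. rewrite cmpA. reflexivity.
    + rewrite seqab_shift, cmpA. reflexivity.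
Qed.

Lemma seqab_pair {X A B : Ob C} (a c : Hom C X A) (b d : Hom C X B) :
  pair (seqab a c) (seqab b d) = seqab (pair a b) (pair c d).
Proof.
  apply seqab_uniq.
  - transitivity (pair (at0 (seqab a c)) (at0 (seqab b d))).
    + unfold at0. rewrite pair_cmp. reflexivity.
    + rewrite !seqab_at0. reflexivity.
  - transitivity (pair (shift (seqab a c)) (shift (seqab b d))).
    + unfold shift. rewrite pair_cmp. reflexivity.
    + rewrite !seqab_shift, pair_cmp. reflexivity.
Qed.

Lemma seqab_const {X A : Ob C} (x : Hom C X A) : seqab x x = constseq x.
Proof.
  symmetry. apply seqab_uniq; unfold at0, shift, constseq; cat_simpl; reflexivity.
Qed.

Section Supermidpoint.
Variables (A : Ob C) (M : Hom C (expN A) A).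
Hypothesis M_super : is_supermidpoint M.

Lemma app2_binop_of {X : Ob C} (x y : Hom C X A) :
  app2 (binop_of M) x y = Mapp M (seqab x y).
Proof.
  unfold app2, binop_of.
  rewrite Mapp_cmp, seqab_cmpr, !pair_pr1, !pair_pr2. reflexivity.
Qed.

Lemma supermidpoint_unfold {X : Ob C} (x : Hom C (prod X nno) A) :
  Mapp M x = app2 (binop_of M) (at0 x) (Mapp M (shift x)).
Proof. rewrite app2_binop_of. apply M_super. Qed.

Lemma binop_of_comm {X : Ob C} (x y : Hom C X A) :
  app2 (binop_of M) x y = app2 (binop_of M) y x.
Proof. rewrite !app2_binop_of. apply M_super. Qed.

(* The commutation law applied to the double sequence (x_j, y_j, y_j, ...)_i. *)
Lemma Mapp_app2_binop_of {X : Ob C} (x y : Hom C (prod X nno) A) :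
  Mapp M (app2 (binop_of M) x y)
  = app2 (binop_of M) (Mapp M x) (Mapp M y).
Proof.
  destruct M_super as (_ & _ & M_swap & _).
  rewrite !app2_binop_of, M_swap. f_equal.
  apply seqab_uniq; unfold at0, shift; rewrite Mapp_cmp; f_equal.
  - transitivity (at0 (seqab x y)).
    + unfold at0, swapN. cat_simpl. reflexivity.
    + apply seqab_at0.
  - rewrite Mapp_cmp. f_equal.
    transitivity (cmp (shift (seqab x y)) swapN).
    + unfold shift, swapN. cat_simpl. reflexivity.
    + rewrite seqab_shift. unfold swapN. cat_simpl. reflexivity.
Qed.

Lemma binop_of_midpoint : is_midpoint (binop_of M).
Proof.
  split; [| split].
  - intros X x. rewrite app2_binop_of, seqab_const. apply M_super.
  - exact (@binop_of_comm).
  - intros X x y z w.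
    assert (seqab_medial : seqab (app2 (binop_of M) x y) (app2 (binop_of M) z w)
                           = app2 (binop_of M) (seqab x z) (seqab y w)).
    { unfold app2. rewrite seqab_pair, seqab_cmpl. reflexivity. }
    rewrite (app2_binop_of (app2 _ x y)), seqab_medial, Mapp_app2_binop_of,
      <- !app2_binop_of.
    reflexivity.
Qed.

End Supermidpoint.

Definition orbit {X : Ob C} (g : Hom C X X) : Hom C (prod X nno) X :=
  nrec (idm X) g.

Lemma orbit_at0 {X : Ob C} (g : Hom C X X) : at0 (orbit g) = idm X.
Proof. apply nrec_zero. Qed.

Lemma orbit_succ {X : Ob C} (g : Hom C X X) : shift (orbit g) = cmp g (orbit g).
Proof. apply nrec_succ. Qed.

(* Both sides are nrec g g. *)
Lemma orbit_shift {X : Ob C} (g : Hom C X X) :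
  cmp (orbit g) (pair (cmp g pr1) pr2) = shift (orbit g).
Proof.
  unfold orbit, shift. transitivity (nrec g g).
  - apply nrec_uniq.
    + transitivity (cmp (cmp (nrec (idm X) g) (pair (idm X) (cmp zero (bang X)))) g).
      * cat_simpl. reflexivity.
      * rewrite nrec_zero. cat_simpl. reflexivity.
    + transitivity (cmp (cmp (nrec (idm X) g) (pair pr1 (cmp succ pr2)))
                        (pair (cmp g pr1) pr2)).
      * cat_simpl. reflexivity.
      * rewrite nrec_succ. cat_simpl. reflexivity.
  - symmetry. apply nrec_uniq.
    + transitivity (cmp (cmp (nrec (idm X) g) (pair pr1 (cmp succ pr2)))
                        (pair (idm X) (cmp zero (bang X)))).
      * cat_simpl. reflexivity.
      * rewrite nrec_succ, cmpA, nrec_zero. cat_simpl. reflexivity.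
    + rewrite nrec_succ, cmpA, nrec_succ. reflexivity.
Qed.

Lemma binop_of_iterative (A : Ob C) (M : Hom C (expN A) A) :
  is_supermidpoint M -> super_cancellative M -> iterative (binop_of M).
Proof.
  intros M_super M_cancel X c.
  set (m := binop_of M). set (g := cmp pr2 c).
  set (a := cmp (cmp pr1 c) (orbit g)).
  assert (fixpoint_eq : forall v : Hom C X A,
    cmp m (cmp (pair pr1 (cmp v pr2)) c) = app2 m (cmp pr1 c) (cmp v g)).
  { intros v. unfold app2, g. cat_simpl. reflexivity. }
  exists (Mapp M a). split.
  - rewrite fixpoint_eq. rewrite (supermidpoint_unfold M_super a) at 2. f_equal.
    + unfold a, at0. rewrite cmpA. fold (at0 (orbit g)).
      rewrite orbit_at0, cmp_idr. reflexivity.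
    + rewrite Mapp_cmp. f_equal. unfold a. rewrite cmpA, orbit_shift.
      unfold shift. rewrite !cmpA. reflexivity.
  - intros v v_fix. set (y := cmp v (orbit g)).
    assert (y_rec : y = app2 m a (shift y)).
    { unfold y. rewrite <- v_fix at 1. rewrite fixpoint_eq, app2_cmp. f_equal.
      transitivity (cmp v (shift (orbit g))).
      + rewrite orbit_succ, cmpA. reflexivity.
      + unfold shift. rewrite cmpA. reflexivity. }
    assert (Mapp_y : app2 m (Mapp M a) (Mapp M (shift y))
                     = app2 m (at0 y) (Mapp M (shift y))).
    { transitivity (Mapp M (app2 m a (shift y))).
      - symmetry. exact (Mapp_app2_binop_of M_super _ _).
      - rewrite <- y_rec. exact (supermidpoint_unfold M_super y). }
    rewrite (binop_of_comm M_super (Mapp M a)), (binop_of_comm M_super (at0 y)) in Mapp_y.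
    apply M_cancel in Mapp_y. rewrite Mapp_y.
    unfold y, at0. rewrite cmpA. fold (at0 (orbit g)). rewrite orbit_at0, cmp_idr.
    reflexivity.
Qed.

Lemma supermidpoint_mconvex_body (A : Ob C) (M : Hom C (expN A) A) :
  is_supermidpoint M -> super_cancellative M -> mconvex_body (binop_of M).
Proof.
  intros M_super M_cancel. split; [| split].
  - exact (binop_of_midpoint M_super).
  - exact M_cancel.
  - exact (binop_of_iterative M_super M_cancel).
Qed.

Section Iterative.
Variables (A : Ob C) (m : Hom C (prod A A) A).

Lemma iterative_uniq : iterative m ->
  forall X (c : Hom C X (prod A X)) (v w : Hom C X A),
    cmp m (cmp (pair pr1 (cmp v pr2)) c) = v ->
    cmp m (cmp (pair pr1 (cmp w pr2)) c) = w -> v = w.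
Proof.
  intros m_iter X c v w v_fix w_fix. destruct (m_iter X c) as [u [_ u_uniq]].
  rewrite (u_uniq v v_fix), (u_uniq w w_fix). reflexivity.
Qed.

(* Naturality reduces everything to the generic sequence ev, where both sides
   solve the iteration equation for c = (g ev, lam (shift ev)). *)
Lemma iterative_natural_seq_uniq {B : Ob C} : iterative m ->
  forall (F G g : forall X : Ob C, Hom C (prod X nno) B -> Hom C X A),
  (forall X Y (f : Hom C Y X) s, cmp (F X s) f = F Y (cmp s (pair (cmp f pr1) pr2))) ->
  (forall X Y (f : Hom C Y X) s, cmp (G X s) f = G Y (cmp s (pair (cmp f pr1) pr2))) ->
  (forall X s, F X s = app2 m (g X s) (F X (shift s))) ->
  (forall X s, G X s = app2 m (g X s) (G X (shift s))) ->
  forall X s, F X s = G X s.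
Proof.
  intros m_iter F G g F_nat G_nat F_rec G_rec.
  assert (generic : F (expN B) ev = G (expN B) ev).
  { apply (iterative_uniq m_iter _ (pair (g _ ev) (lam (shift ev)))).
    - transitivity (app2 m (g _ ev) (cmp (F _ ev) (lam (shift ev)))).
      + unfold app2. cat_simpl. reflexivity.
      + rewrite F_nat, lam_beta. symmetry. apply F_rec.
    - transitivity (app2 m (g _ ev) (cmp (G _ ev) (lam (shift ev)))).
      + unfold app2. cat_simpl. reflexivity.
      + rewrite G_nat, lam_beta. symmetry. apply G_rec. }
  intros X s. rewrite <- (lam_beta _ _ _ s), <- F_nat, <- G_nat, generic. reflexivity.
Qed.

Lemma assoc_infop_exists_unique : iterative m ->
  exists M : Hom C (expN A) A, assoc_infop m M
    /\ forall M' : Hom C (expN A) A, assoc_infop m M' -> M' = M.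
Proof.
  intros m_iter.
  set (c := pair (at0 (@ev C A)) (lam (shift (@ev C A)))).
  destruct (m_iter _ c) as [M [M_fix M_uniq]].
  exists M. split.
  - intros X x. unfold Mapp. rewrite <- M_fix at 1.
    transitivity (app2 m (cmp (at0 ev) (lam x)) (cmp M (cmp (lam (shift ev)) (lam x)))).
    + unfold app2, c. cat_simpl. reflexivity.
    + f_equal.
      * rewrite <- (lam_beta _ _ _ x) at 2. unfold at0. cat_simpl. reflexivity.
      * rewrite lam_cmp. do 2 f_equal.
        rewrite <- (lam_beta _ _ _ x) at 2. unfold shift. cat_simpl. reflexivity.
  - intros M' M'_infop. apply M_uniq.
    assert (M'_ev := M'_infop _ (@ev C A)). unfold Mapp in M'_ev.
    rewrite lam_ev, cmp_idr in M'_ev. rewrite M'_ev at 2.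
    unfold app2, c. cat_simpl. reflexivity.
Qed.

Section AssocInfop.
Hypotheses (m_mid : is_midpoint m) (m_iter : iterative m).
Variable M : Hom C (expN A) A.
Hypothesis M_infop : assoc_infop m M.

Lemma assoc_infop_const {X : Ob C} (x : Hom C X A) : Mapp M (constseq x) = x.
Proof.
  apply (iterative_uniq m_iter _ (pair x (idm X))).
  - transitivity (app2 m (at0 (constseq x)) (Mapp M (shift (constseq x)))).
    + unfold app2, at0, shift, constseq. cat_simpl. reflexivity.
    + symmetry. apply M_infop.
  - cat_simpl. apply m_mid.
Qed.

Lemma assoc_infop_seqab {X : Ob C} (x y : Hom C X A) :
  Mapp M (seqab x y) = app2 m x y.
Proof.
  rewrite M_infop, seqab_at0, seqab_shift. fold (constseq y).
  rewrite assoc_infop_const. reflexivity.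
Qed.

Lemma assoc_infop_binop_of {X : Ob C} (x y : Hom C X A) :
  app2 (binop_of M) x y = app2 m x y.
Proof. rewrite app2_binop_of. apply assoc_infop_seqab. Qed.

(* Both sides satisfy the recursion with leading term m(x_0, y_0), by mediality. *)
Lemma assoc_infop_app2 {X : Ob C} (x y : Hom C (prod X nno) A) :
  Mapp M (app2 m x y) = app2 m (Mapp M x) (Mapp M y).
Proof.
  destruct m_mid as (_ & _ & m_medial).
  transitivity (app2 m (Mapp M (cmp pr1 (pair x y))) (Mapp M (cmp pr2 (pair x y)))).
  2: rewrite pair_pr1, pair_pr2; reflexivity.
  refine (iterative_natural_seq_uniq m_iter
    (fun X s => Mapp M (cmp m s))
    (fun X s => app2 m (Mapp M (cmp pr1 s)) (Mapp M (cmp pr2 s)))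
    (fun X s => cmp m (at0 s)) _ _ _ _ X (pair x y)); intros.
  - rewrite Mapp_cmp, cmpA. reflexivity.
  - rewrite app2_cmp, !Mapp_cmp, !cmpA. reflexivity.
  - rewrite M_infop. unfold at0, shift. rewrite !cmpA. reflexivity.
  - rewrite (M_infop _ (cmp pr1 s)), (M_infop _ (cmp pr2 s)), m_medial.
    unfold at0, shift. rewrite !cmpA. f_equal.
    unfold app2. rewrite <- !cmpA, <- pair_cmp, pair_proj, cmpA. reflexivity.
Qed.

Lemma assoc_infop_swap {X : Ob C} (x : Hom C (prod (prod X nno) nno) A) :
  Mapp M (Mapp M x) = Mapp M (Mapp M (cmp x swapN)).
Proof.
  rewrite <- (lam_beta _ _ _ x) at 2. fold (uncurry (lam x)).
  refine (iterative_natural_seq_uniq m_iter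
    (fun X s => Mapp M (cmp M s))
    (fun X s => Mapp M (Mapp M (cmp (uncurry s) swapN)))
    (fun X s => cmp M (at0 s)) _ _ _ _ X (lam x)); intros.
  - rewrite Mapp_cmp, cmpA. reflexivity.
  - rewrite !Mapp_cmp. do 2 f_equal. unfold uncurry, swapN. cat_simpl. reflexivity.
  - rewrite M_infop. unfold at0, shift. rewrite !cmpA. reflexivity.
  - rewrite (M_infop _ (cmp (uncurry s) swapN)), assoc_infop_app2. f_equal.
    + transitivity (Mapp M (uncurry (at0 s))).
      * f_equal. unfold uncurry, at0, swapN. cat_simpl. reflexivity.
      * unfold Mapp. rewrite lam_uncurry. reflexivity.
    + do 2 f_equal. unfold uncurry, shift, swapN. cat_simpl. reflexivity.
Qed.

Lemma assoc_infop_supermidpoint : is_supermidpoint M.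
Proof.
  split; [| split; [| split]].
  - exact (@assoc_infop_const).
  - intros X x y. rewrite !assoc_infop_seqab. apply m_mid.
  - exact (@assoc_infop_swap).
  - intros X x. rewrite assoc_infop_seqab. apply M_infop.
Qed.

Lemma assoc_infop_super_cancellative : mcancellative m -> super_cancellative M.
Proof.
  intros m_cancel X x y z. rewrite !assoc_infop_binop_of. apply m_cancel.
Qed.

End AssocInfop.
End Iterative.
End Midpoints.

Theorem mainTheorem2 (C : CatPN) :
  (forall (A : Ob C) (m : Hom C (prod A A) A),
     is_midpoint m -> iterative m ->
     (exists M : Hom C (expN A) A, assoc_infop m M
        /\ forall M' : Hom C (expN A) A, assoc_infop m M' -> M' = M) /\
     (forall M : Hom C (expN A) A, assoc_infop m M ->
        is_supermidpoint M /\ (mcancellative m -> super_cancellative M))) /\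
  (forall (A : Ob C) (M : Hom C (expN A) A),
     is_supermidpoint M -> super_cancellative M -> mconvex_body (binop_of M)).
Proof.
  split.
  - intros A m m_mid m_iter. split.
    + exact (assoc_infop_exists_unique m_iter).
    + intros M M_infop. split.
      * exact (assoc_infop_supermidpoint m_mid m_iter M_infop).
      * exact (assoc_infop_super_cancellative m_mid m_iter M_infop).
  - exact (@supermidpoint_mconvex_body C).
Qed.
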